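(* Let $(G,t)$ be an infinite biosphere. For every vertex $v\in G$ there exists an $\mathrm{IAP}\cap\mathrm{CONV}\cap\mathrm{CA}\cap\mathrm{REF}$-maximal set containing $v$; that is, a nonempty set $S$ of vertices of $G$ with $v\in S$ and $S\in \mathrm{IAP}\cap\mathrm{CONV}\cap\mathrm{CA}\cap\mathrm{REF}$, such that no proper superset of $S$ belongs to $\mathrm{IAP}\cap\mathrm{CONV}\cap\mathrm{CA}\cap\mathrm{REF}$.
   Context: An infinite biosphere is a directed graph $G$ together with a function $t$ assigning a real number $t(v)$ to each vertex, such that: (1) if $v$ is a parent of $w$ (edge from $v$ to $w$) then $t(v)<t(w)$; (2) for every $r\in\mathbb R$ at most finitely many vertices $v$ have $t(v)<r$; (3) every vertex has finitely many children; (4) $G$ is infinite. $v$ is an ancestor of $w$ (and $w$ a descendant of $v$) if there is a directed path $v=v_1,\dots,v_n=w$ with $n>1$. A $G$-subset is a set of vertices. $\mathrm{IAP}$: $G$-subsets $S$ such that no $v\in S$ has both infinitely many descendants in $S$ and infinitely many non-descendants in $S$. $\mathrm{CONV}$: $G$-subsets $S$ such that every $v\in G$ having an ancestor in $S$ and a descendant in $S$ lies in $S$. $\mathrm{CA}$: $G$-subsets $S$ for which there exists $v\in S$ such that every $w\in S$ with $w\neq v$ is a descendant of $v$. $\mathrm{REF}$: $G$-subsets $S$ such that every $v\in S$ with infinitely many descendants in $G$ has infinitely many descendants in $S$. *)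

From Stdlib Require Import Reals List Relations.
Open Scope R_scope.

Definition finite_pred {V : Type} (P : V -> Prop) : Prop :=
  exists l : list V, forall x, P x -> In x l.

(* Infinite biosphere: vertex type V, edge relation E (E v w = "v is a parent of w"),
   time function t. *)
Definition infinite_biosphere {V : Type} (E : V -> V -> Prop) (t : V -> R) : Prop :=
  (forall v w, E v w -> t v < t w) /\
  (forall r : R, finite_pred (fun v => t v < r)) /\
  (forall v, finite_pred (fun w => E v w)) /\
  ~ finite_pred (fun _ : V => True).

Definition descendant {V : Type} (E : V -> V -> Prop) (v w : V) : Prop :=
  clos_trans V E v w.

Definition IAP {V : Type} (E : V -> V -> Prop) (S : V -> Prop) : Prop :=
  forall v, S v ->
    ~ ( ~ finite_pred (fun w => S w /\ descendant E v w) /\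
        ~ finite_pred (fun w => S w /\ ~ descendant E v w)).

Definition CONV {V : Type} (E : V -> V -> Prop) (S : V -> Prop) : Prop :=
  forall v, (exists a, S a /\ descendant E a v) ->
            (exists d, S d /\ descendant E v d) -> S v.

Definition CA {V : Type} (E : V -> V -> Prop) (S : V -> Prop) : Prop :=
  exists v, S v /\ forall w, S w -> w <> v -> descendant E v w.

Definition REF {V : Type} (E : V -> V -> Prop) (S : V -> Prop) : Prop :=
  forall v, S v -> ~ finite_pred (fun w => descendant E v w) ->
    ~ finite_pred (fun w => S w /\ descendant E v w).

Definition good {V : Type} (E : V -> V -> Prop) (S : V -> Prop) : Prop :=
  IAP E S /\ CONV E S /\ CA E S /\ REF E S.

From Stdlib Require Import Reals List Relations Classical ClassicalEpsilon Lra Lia Cantor.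
Open Scope R_scope.

(* The roots of the good sets containing v lie among v and its finitely many ancestors;
   fix one, r, of least time. Every good set containing v and r then has root r, and the
   union of an increasing chain of good sets with a common root is good: CONV, CA and REF
   pass to unions directly, and for IAP the finitely many children of the vertices of a
   fixed member of the chain serve as exit points. As the vertices are countable, enlarging
   a good set along an enumeration, adding the n-th vertex whenever some good superset
   contains it, yields a maximal good set.
   A good set containing v exists: if v has finitely many descendants, take v with all of
   them; otherwise take the vertices lying between v and a ray from v, where the ray is
   shrunk along an enumeration to avoid every vertex it can be made to avoid. By Koenig's
   lemma the shrinking rays have a limit ray, and every vertex of its hull has only
   finitely many non-descendants in the hull. *)

Section FinitePredicates.
Context {V : Type}.

Lemma finite_pred_sub (P Q : V -> Prop) :
  finite_pred Q -> (forall x, P x -> Q x) -> finite_pred P.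
Proof. intros [l Hl] H. exists l. auto. Qed.

Lemma finite_pred_or (P Q : V -> Prop) :
  finite_pred P -> finite_pred Q -> finite_pred (fun x => P x \/ Q x).
Proof.
  intros [l1 H1] [l2 H2]. exists (l1 ++ l2).
  intros x [Hx|Hx]; apply in_or_app; auto.
Qed.

Lemma finite_pred_empty (P : V -> Prop) : (forall x, ~ P x) -> finite_pred P.
Proof. intros H. exists nil. intros x Px. destruct (H x Px). Qed.

Lemma finite_pred_eq (c : V) : finite_pred (fun w => w = c).
Proof. exists (c :: nil). intros x ->. left. reflexivity. Qed.

Lemma finite_pred_bigcup {A : Type} (l : list A) (R : A -> V -> Prop) :
  (forall a, In a l -> finite_pred (R a)) ->
  finite_pred (fun x => exists a, In a l /\ R a x).
Proof.
  induction l as [|a l IH]; intros H.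
  - apply finite_pred_empty. intros x [b [[] _]].
  - eapply finite_pred_sub.
    + apply (finite_pred_or (R a) (fun x => exists b, In b l /\ R b x)).
      * apply H. left. reflexivity.
      * apply IH. intros b Hb. apply H. right. exact Hb.
    + intros x [b [[<-|Hb] Hx]]; [left | right; exists b]; auto.
Qed.

Lemma not_finite_pred_inhabited (P : V -> Prop) : ~ finite_pred P -> exists x, P x.
Proof.
  intros H. apply NNPP. intro N. apply H. apply finite_pred_empty.
  intros x Px. apply N. exists x. exact Px.
Qed.

Lemma finite_pred_argmin (f : V -> R) (P : V -> Prop) :
  finite_pred P -> (exists x, P x) -> exists x, P x /\ forall y, P y -> f x <= f y.
Proof.
  intros [l Hl]. revert P Hl. induction l as [|a l IH]; intros P Hl [x0 Hx0].
  - destruct (Hl x0 Hx0).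
  - destruct (classic (exists x, P x /\ x <> a)) as [Hne|Hno].
    + destruct (IH (fun x => P x /\ x <> a)) as [m [[Pm _] Hm]]; [|exact Hne|].
      { intros x [Px Nx]. destruct (Hl x Px); [congruence|assumption]. }
      destruct (classic (P a /\ f a < f m)) as [[Pa Ha]|Ha].
      * exists a. split; [exact Pa|]. intros y Py.
        destruct (classic (y = a)) as [->|Nya]; [lra|].
        specialize (Hm y (conj Py Nya)). lra.
      * exists m. split; [exact Pm|]. intros y Py.
        destruct (classic (y = a)) as [->|Nya]; [|apply Hm; auto].
        apply Rnot_lt_le. intro. apply Ha. auto.
    + assert (Pa : P a).
      { destruct (classic (x0 = a)) as [<-|N]; [exact Hx0|].
        exfalso. apply Hno. eauto. }
      exists a. split; [exact Pa|]. intros y Py.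
      destruct (classic (y = a)) as [->|N]; [lra|].
      exfalso. apply Hno. eauto.
Qed.

Lemma not_finite_pred_unbounded (f : V -> R) (Q : V -> Prop) :
  (exists x, Q x) -> (forall x, Q x -> exists y, Q y /\ f x < f y) ->
  ~ finite_pred Q.
Proof.
  intros Hne Hup Hfin.
  destruct (finite_pred_argmin (fun x => - f x) Q Hfin Hne) as [m [Qm Hm]].
  destruct (Hup m Qm) as [y [Qy Hy]]. specialize (Hm y Qy). lra.
Qed.

Lemma list_pigeonhole_antitone (l : list V) (Q : nat -> V -> Prop) :
  (forall n c, Q (S n) c -> Q n c) -> (forall n, exists c, In c l /\ Q n c) ->
  exists c, In c l /\ forall n, Q n c.
Proof.
  intros Hanti.
  assert (Anti : forall n m c, (n <= m)%nat -> Q m c -> Q n c).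
  { intros n m c Hle. induction Hle; auto. }
  induction l as [|a l IH]; intros H.
  - destruct (H O) as [c [[] _]].
  - destruct (classic (forall n, Q n a)) as [Ha|Ha].
    + exists a. split; [left|]; auto.
    + apply not_all_ex_not in Ha. destruct Ha as [n0 Hn0].
      destruct IH as [c [Hc Hq]].
      * intro n. destruct (H (Nat.max n n0)) as [c [[<-|Hc] Hq]].
        -- exfalso. apply Hn0. apply (Anti _ (Nat.max n n0)); auto. lia.
        -- exists c. split; auto. apply (Anti _ (Nat.max n n0)); auto. lia.
      * exists c. split; [right|]; auto.
Qed.

End FinitePredicates.

Lemma dependent_choice_indexed {A : Type} (ok : A -> Prop) (step : nat -> A -> A -> Prop)
  (a0 : A) :
  ok a0 -> (forall n a, ok a -> exists b, ok b /\ step n a b) ->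
  exists s : nat -> A, s O = a0 /\ forall n, ok (s n) /\ step n (s n) (s (S n)).
Proof.
  intros H0 Hstep.
  assert (Hf : forall n a, exists b, ok a -> ok b /\ step n a b).
  { intros n a. destruct (classic (ok a)) as [Ha|Ha].
    - destruct (Hstep n a Ha) as [b Hb]. exists b. auto.
    - exists a. tauto. }
  pose (f := fun n a => proj1_sig (constructive_indefinite_description _ (Hf n a))).
  assert (Hf' : forall n a, ok a -> ok (f n a) /\ step n a (f n a)).
  { intros n a. unfold f. destruct (constructive_indefinite_description _ _). auto. }
  pose (s := fix s n := match n with O => a0 | S n' => f n' (s n') end).
  assert (Hs : forall n, ok (s n)).
  { induction n; [exact H0 | apply Hf'; exact IHn]. }
  exists s. split; [reflexivity|]. intro n. split; [apply Hs | apply Hf', Hs].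
Qed.

Lemma greedy_sequence {A X : Type} (ok : A -> Prop) (R : A -> A -> Prop)
  (want : A -> X -> Prop) (e : nat -> X) (a0 : A) :
  (forall a, R a a) -> ok a0 ->
  exists s : nat -> A, s O = a0 /\ forall n, ok (s n) /\ R (s n) (s (S n)) /\
    ((exists b, ok b /\ R (s n) b /\ want b (e n)) -> want (s (S n)) (e n)).
Proof.
  intros Hrefl H0.
  apply (dependent_choice_indexed ok
    (fun n a b => R a b /\ ((exists b', ok b' /\ R a b' /\ want b' (e n)) -> want b (e n)))
    a0 H0).
  intros n a Ha. destruct (classic (exists b, ok b /\ R a b /\ want b (e n)))
    as [[b Hb]|Hno].
  - exists b. split; [apply Hb|]. split; [apply Hb|]. intros _. apply Hb.
  - exists a. split; [exact Ha|]. split; [apply Hrefl|]. intro H. contradiction.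
Qed.

Section Descendants.
Context {V : Type} (E : V -> V -> Prop).

Lemma descendant_step x y : E x y -> descendant E x y.
Proof. apply t_step. Qed.

Lemma descendant_trans x y z :
  descendant E x y -> descendant E y z -> descendant E x z.
Proof. apply t_trans. Qed.

Lemma descendant_time (t : V -> R) :
  (forall v w, E v w -> t v < t w) -> forall x y, descendant E x y -> t x < t y.
Proof. intros Ht x y D. induction D; [auto | lra]. Qed.

Definition weak_descendant (v y : V) : Prop := y = v \/ descendant E v y.

Lemma weak_descendant_descendant x y z :
  weak_descendant x y -> descendant E y z -> descendant E x z.
Proof. intros [->|H] D; [exact D | eapply descendant_trans; eauto]. Qed.

Lemma descendant_weak_descendant x y z :
  descendant E x y -> weak_descendant y z -> descendant E x z.
Proof. intros D [->|H]; [exact D | eapply descendant_trans; eauto]. Qed.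

Lemma weak_descendant_trans v x y :
  weak_descendant v x -> descendant E x y -> weak_descendant v y.
Proof. intros H D. right. eapply weak_descendant_descendant; eauto. Qed.

Lemma finite_pred_children (P : V -> Prop) :
  (forall x, finite_pred (fun w => E x w)) -> finite_pred P ->
  finite_pred (fun c => exists p, P p /\ E p c).
Proof.
  intros Hch [l Hl]. eapply finite_pred_sub.
  - apply (finite_pred_bigcup l (fun p c => E p c)). intros a _. apply Hch.
  - intros c [p [Pp Ep]]. exists p. auto.
Qed.

Lemma exit_edge (S : V -> Prop) r z :
  S r -> ~ S z -> descendant E r z ->
  exists p c, S p /\ E p c /\ ~ S c /\ weak_descendant c z /\ weak_descendant r p.
Proof.
  intros Sr Sz D. apply clos_trans_tn1_iff in D.
  induction D as [z Erz | z' z Ez' D IH].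
  - exists r, z. repeat split; auto; left; reflexivity.
  - destruct (classic (S z')) as [Sz'|Nz'].
    + exists z', z. repeat split; auto; [left; reflexivity|].
      right. apply clos_trans_tn1_iff. exact D.
    + destruct (IH Nz') as [p [c [Sp [Epc [Nc [Hc Hp]]]]]].
      exists p, c. repeat split; auto.
      right. eapply weak_descendant_descendant; [exact Hc|]. apply descendant_step, Ez'.
Qed.

Lemma koenig_step (X : V -> Prop) x :
  finite_pred (fun w => E x w) ->
  ~ finite_pred (fun z => X z /\ descendant E x z) ->
  exists c, E x c /\ ~ finite_pred (fun z => X z /\ descendant E c z).
Proof.
  intros [l Hl] Hinf. apply NNPP. intro Hno. apply Hinf.
  eapply finite_pred_sub.
  - apply (finite_pred_bigcup l (fun c z => E x c /\ (z = c \/ X z /\ descendant E c z))).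
    intros c _. destruct (classic (E x c)) as [Ec|Nc].
    + eapply finite_pred_sub; [apply (finite_pred_or _ (fun z => X z /\ descendant E c z) (finite_pred_eq c))|].
      * apply NNPP. intro Hf. apply Hno. exists c. auto.
      * intros z [_ Hz]. exact Hz.
    + apply finite_pred_empty. intros z [Ec _]. contradiction.
  - intros z [Xz Dz]. apply clos_trans_t1n_iff in Dz.
    destruct Dz as [z Exz | y z Exy Dyz].
    + exists z. auto.
    + exists y. split; [auto|]. split; [exact Exy|]. right. split; [exact Xz|].
      apply clos_trans_t1n_iff. exact Dyz.
Qed.

Definition ray_from (v : V) (p : nat -> V) : Prop := p O = v /\ forall k, E (p k) (p (S k)).

Lemma ray_from_invariant (Q : V -> Prop) v :
  Q v -> (forall x, Q x -> exists y, E x y /\ Q y) ->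
  exists p, ray_from v p /\ forall k, Q (p k).
Proof.
  intros Hv Hs.
  destruct (dependent_choice_indexed Q (fun _ => E) v Hv) as [p [Hp0 Hp]].
  { intros _ x Qx. destruct (Hs x Qx) as [y [Exy Qy]]. exists y. auto. }
  exists p. split; [split; [exact Hp0|]|]; intro k; apply Hp.
Qed.

Lemma koenig_ray (X : V -> Prop) v :
  (forall x, finite_pred (fun w => E x w)) ->
  ~ finite_pred (fun z => X z /\ descendant E v z) ->
  exists p, ray_from v p /\ forall k, ~ finite_pred (fun z => X z /\ descendant E (p k) z).
Proof.
  intros Hch Hv.
  apply (ray_from_invariant (fun x => ~ finite_pred (fun z => X z /\ descendant E x z)));
    [exact Hv|].
  intros x Hx. apply koenig_step; auto.
Qed.

Lemma ray_from_descendant v p :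
  ray_from v p -> forall j d, descendant E (p j) (p (S d + j)%nat).
Proof.
  intros [_ H] j d. induction d.
  - apply descendant_step, H.
  - eapply descendant_trans; [exact IHd|]. apply descendant_step, H.
Qed.

Lemma ray_from_weak_descendant v p :
  ray_from v p -> forall k, weak_descendant v (p k).
Proof.
  intros Hr k. destruct k as [|k]; [left; apply Hr|].
  right. pose proof (ray_from_descendant v p Hr O k) as D.
  destruct Hr as [H0 _]. rewrite H0, Nat.add_0_r in D. exact D.
Qed.

End Descendants.

Section GoodSets.
Context {V : Type} (E : V -> V -> Prop).
Hypothesis finite_children : forall x, finite_pred (fun w => E x w).

Definition is_root (S : V -> Prop) (r : V) : Prop :=
  S r /\ forall w, S w -> w <> r -> descendant E r w.

Lemma IAP_REF_nondescendants_finite (S : V -> Prop) y :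
  IAP E S -> REF E S -> S y -> ~ finite_pred (fun w => descendant E y w) ->
  finite_pred (fun w => S w /\ ~ descendant E y w).
Proof.
  intros HI HR Sy Dinf. apply NNPP. intro N. exact (HI y Sy (conj (HR y Sy Dinf) N)).
Qed.

Lemma CONV_child_outside (S : V -> Prop) p c :
  CONV E S -> S p -> E p c -> ~ S c -> forall w, S w -> ~ descendant E c w.
Proof.
  intros HC Sp Epc Nc w Sw D. apply Nc, HC.
  - exists p. split; [exact Sp | apply descendant_step, Epc].
  - exists w. auto.
Qed.

Section Chain.
Variables (C : nat -> V -> Prop) (r : V).
Hypothesis chain_good : forall n, good E (C n).
Hypothesis chain_increasing : forall n x, C n x -> C (S n) x.
Hypothesis chain_root : forall n, is_root (C n) r.

Local Notation U := (fun x => exists n, C n x).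

Lemma chain_mono n m x : (n <= m)%nat -> C n x -> C m x.
Proof. intros Hle. induction Hle; auto. Qed.

Lemma chain_union_exit m y w :
  C m y -> U w -> ~ descendant E y w -> ~ C m w ->
  exists p c, C m p /\ ~ descendant E y p /\ E p c /\ ~ C m c /\ U c /\
              weak_descendant E c w.
Proof.
  intros Hy [k Hk] Nyw Nmw.
  assert (Drw : descendant E r w).
  { apply (chain_root k); [exact Hk|]. intros ->. apply Nmw, chain_root. }
  destruct (exit_edge E (C m) r w (proj1 (chain_root m)) Nmw Drw)
    as [p [c [Sp [Epc [Nc [Hc Hp]]]]]].
  assert (Uc : U c).
  { exists k. destruct Hc as [->|Hc]; [exact Hk|].
    apply (chain_good k).
    - exists r. split; [apply chain_root|].
      eapply weak_descendant_descendant; [exact Hp | apply descendant_step, Epc].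
    - exists w. auto. }
  assert (Nyp : ~ descendant E y p).
  { intro Dyp. apply Nyw. eapply descendant_trans; [exact Dyp|].
    eapply descendant_weak_descendant; [apply descendant_step, Epc | exact Hc]. }
  exists p, c. auto 7.
Qed.

Lemma chain_union_escape m y :
  C m y -> ~ finite_pred (fun w => descendant E y w) ->
  ~ finite_pred (fun w => U w /\ ~ descendant E y w) ->
  exists p c, C m p /\ E p c /\ ~ C m c /\ U c /\ ~ finite_pred (fun w => descendant E c w).
Proof.
  intros Hy Dinf Ninf.
  destruct (chain_good m) as [IAPm [_ [_ REFm]]].
  pose proof (IAP_REF_nondescendants_finite (C m) y IAPm REFm Hy Dinf) as Fm.
  set (B := fun w => U w /\ ~ descendant E y w /\ ~ C m w).
  assert (IB : ~ finite_pred B).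
  { intro FB. apply Ninf. eapply finite_pred_sub; [apply (finite_pred_or _ _ Fm FB)|].
    intros w [Uw Nw]. destruct (classic (C m w)); [left|right]; unfold B; auto. }
  destruct (finite_pred_children E _ finite_children Fm) as [l Hl].
  set (Below := fun c w => B w /\ (exists p, C m p /\ E p c) /\ ~ C m c /\ U c /\
                           weak_descendant E c w).
  assert (Hc : exists c, In c l /\ ~ finite_pred (Below c)).
  { apply NNPP. intro N. apply IB. eapply finite_pred_sub.
    - apply (finite_pred_bigcup l Below). intros c Hc. apply NNPP. intro N2. apply N. eauto.
    - intros w Bw. destruct Bw as [Uw [Nyw Nmw]] eqn:EB.
      destruct (chain_union_exit m y w Hy Uw Nyw Nmw)
        as [p [c [Smp [Nyp [Epc [Nmc [Uc Hcw]]]]]]].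
      exists c. split; [apply Hl; exists p; auto|]. unfold Below. eauto 7. }
  destruct Hc as [c [_ Ic]].
  destruct (not_finite_pred_inhabited _ Ic) as [w0 [_ [[p [Smp Epc]] [Nmc [Uc _]]]]].
  exists p, c. repeat split; auto.
  intro F. apply Ic. eapply finite_pred_sub; [apply (finite_pred_or _ _ (finite_pred_eq c) F)|].
  intros w [_ [_ [_ [_ Hw]]]]. exact Hw.
Qed.

(* If [y] in [C m] had infinitely many non-descendants in the union, some [c] just outside
   [C m] would have infinitely many descendants and lie in a later [C K]; IAP puts almost
   all of [C K] below [c], while CONV keeps the infinite set [C m] below [y] away from it. *)
Lemma chain_union_IAP : IAP E U.
Proof.
  intros y [m Hy] [Hd Hnd].
  destruct (classic (finite_pred (fun w => descendant E y w))) as [Dfin|Dinf].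
  { apply Hd. eapply finite_pred_sub; [exact Dfin|]. intros w [_ D]. exact D. }
  destruct (chain_union_escape m y Hy Dinf Hnd) as [p [c [Smp [Epc [Nmc [[k Hkc] Dcinf]]]]]].
  set (K := Nat.max k m).
  destruct (chain_good K) as [IAPK [_ [_ REFK]]].
  assert (FK : finite_pred (fun w => C K w /\ ~ descendant E c w)).
  { apply (IAP_REF_nondescendants_finite (C K) c IAPK REFK); [|exact Dcinf].
    apply (chain_mono k); [lia | exact Hkc]. }
  apply (proj2 (proj2 (proj2 (chain_good m))) y Hy Dinf).
  eapply finite_pred_sub; [exact FK|]. intros w [Hmw _]. split.
  - apply (chain_mono m); [lia | exact Hmw].
  - exact (CONV_child_outside (C m) p c (proj1 (proj2 (chain_good m))) Smp Epc Nmc w Hmw).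
Qed.

Lemma chain_union_good : good E U.
Proof.
  split; [exact chain_union_IAP | split; [|split]].
  - intros x [a [[n1 Ha] Dax]] [d [[n2 Hd] Dxd]].
    exists (Nat.max n1 n2). apply (chain_good (Nat.max n1 n2)).
    + exists a. split; [apply (chain_mono n1); [lia|exact Ha] | exact Dax].
    + exists d. split; [apply (chain_mono n2); [lia|exact Hd] | exact Dxd].
  - exists r. split; [exists O; apply chain_root|].
    intros w [n Hn] Hne. apply (chain_root n); assumption.
  - intros y [n Hn] Dinf F. apply (proj2 (proj2 (proj2 (chain_good n))) y Hn Dinf).
    eapply finite_pred_sub; [exact F|]. intros w [H1 H2]. split; [exists n|]; assumption.
Qed.

End Chain.
End GoodSets.

Section Biosphere.
Context {V : Type} (E : V -> V -> Prop) (t : V -> R).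
Hypothesis time_increasing : forall v w, E v w -> t v < t w.
Hypothesis finite_children : forall x, finite_pred (fun w => E x w).
Hypothesis finite_before : forall r, finite_pred (fun v => t v < r).

Definition ray_hull (v : V) (p : nat -> V) (y : V) : Prop :=
  weak_descendant E v y /\ exists j, descendant E y (p j).

Lemma ray_hull_ray v p k : ray_from E v p -> ray_hull v p (p k).
Proof.
  intros Hr. split; [apply (ray_from_weak_descendant E v p Hr)|].
  exists (S k). apply descendant_step, Hr.
Qed.

Lemma ray_hull_origin v p : ray_from E v p -> ray_hull v p v.
Proof. intros Hr. pose proof (ray_hull_ray v p O Hr) as H. rewrite (proj1 Hr) in H. exact H. Qed.

Lemma ray_hull_good v p :
  ray_from E v p ->
  (forall y, ray_hull v p y -> finite_pred (fun w => ray_hull v p w /\ ~ descendant E y w)) ->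
  good E (ray_hull v p).
Proof.
  intros Hr Hfin. split; [|split; [|split]].
  - intros y Hy [_ N]. apply N, Hfin, Hy.
  - intros x [a [[Wa _] Dax]] [d [[_ [j Hj]] Dxd]]. split.
    + eapply weak_descendant_trans; eauto.
    + exists j. eapply descendant_trans; eauto.
  - exists v. split; [apply ray_hull_origin, Hr|].
    intros w [[->|Hw] _] Hne; [congruence | exact Hw].
  - intros y Hy _. apply (not_finite_pred_unbounded t).
    + destruct Hy as [_ [j Hj]]. exists (p j). split; [apply ray_hull_ray, Hr | exact Hj].
    + intros x [[_ [j Hj]] Dyx]. exists (p j). split.
      * split; [apply ray_hull_ray, Hr | eapply descendant_trans; eauto].
      * eapply descendant_time; eauto.
Qed.

Lemma ray_hull_avoid v p y :
  ray_from E v p -> y <> v -> ray_hull v p y ->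
  ~ finite_pred (fun w => ray_hull v p w /\ ~ descendant E y w) ->
  exists q, ray_from E v q /\ (forall x, ray_hull v q x -> ray_hull v p x) /\
            ~ ray_hull v q y.
Proof.
  intros Hr Hyv Hy Hinf.
  set (X := fun w => ray_hull v p w /\ ~ descendant E y w).
  destruct (koenig_ray E X v finite_children) as [q [Hq Hqinf]].
  { intro F. apply Hinf. eapply finite_pred_sub; [apply (finite_pred_or _ _ (finite_pred_eq v) F)|].
    intros w Xw. destruct (proj1 (proj1 Xw)) as [->|Dw]; [left | right]; auto. }
  assert (Hqk : forall k, ray_hull v p (q k) /\ ~ descendant E y (q k)).
  { intro k. destruct (not_finite_pred_inhabited _ (Hqinf k)) as [z [[[_ [j Hj]] Nyz] Dqz]].
    split; [split|].
    - apply (ray_from_weak_descendant E v q Hq).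
    - exists j. eapply descendant_trans; eauto.
    - intro D. apply Nyz. eapply descendant_trans; eauto. }
  exists q. split; [exact Hq | split].
  - intros x [Wx [j Hj]]. destruct (proj1 (Hqk j)) as [_ [i Hi]].
    split; [exact Wx|]. exists i. eapply descendant_trans; eauto.
  - intros [_ [j Hj]]. exact (proj2 (Hqk j) Hj).
Qed.

Lemma ray_hull_child v p y :
  ray_from E v p -> ray_hull v p y -> exists c, E y c /\ ray_hull v p c.
Proof.
  intros Hr [Wy [j Hj]]. apply clos_trans_t1n_iff in Hj.
  remember (p j) as pj eqn:Epj.
  destruct Hj as [z Eyz | c z Eyc Dcz]; subst z.
  - exists (p j). split; [exact Eyz|]. split.
    + eapply weak_descendant_trans; [exact Wy | apply descendant_step, Eyz].
    + exists (S j). apply descendant_step, Hr.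
  - exists c. split; [exact Eyc|]. split.
    + eapply weak_descendant_trans; [exact Wy | apply descendant_step, Eyc].
    + exists j. apply clos_trans_t1n_iff. exact Dcz.
Qed.

(* Each vertex common to all the hulls has a child common to all of them, since it
   has finitely many children and the hulls decrease. *)
Lemma ray_hull_limit v (P : nat -> nat -> V) :
  (forall n, ray_from E v (P n)) ->
  (forall n y, ray_hull v (P (S n)) y -> ray_hull v (P n) y) ->
  exists q, ray_from E v q /\ forall n y, ray_hull v q y -> ray_hull v (P n) y.
Proof.
  intros Hr Hdec.
  set (L := fun y => forall n, ray_hull v (P n) y).
  destruct (ray_from_invariant E L v) as [q [Hq HqL]].
  - intro n. apply ray_hull_origin, Hr.
  - intros x Lx. destruct (finite_children x) as [l Hl].
    destruct (list_pigeonhole_antitone l (fun n c => E x c /\ ray_hull v (P n) c))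
      as [c [_ Hc]].
    + intros n c [H1 H2]. split; auto.
    + intro n. destruct (ray_hull_child v (P n) x (Hr n) (Lx n)) as [c [Ec Sc]].
      exists c. auto.
    + exists c. split; [apply (Hc O)|]. intro n. apply Hc.
  - exists q. split; [exact Hq|]. intros n y [Wy [j Hj]].
    destruct (HqL j n) as [_ [i Hi]]. split; [exact Wy|].
    exists i. eapply descendant_trans; eauto.
Qed.

Lemma ray_from_infinite v :
  ~ finite_pred (fun w => descendant E v w) -> exists p, ray_from E v p.
Proof.
  intros Hinf. destruct (koenig_ray E (fun _ => True) v finite_children) as [p [Hp _]].
  - intro F. apply Hinf. eapply finite_pred_sub; [exact F|]. intros w D. split; auto.
  - exists p. exact Hp.
Qed.

Lemma vertices_enumeration (v0 : V) : exists e : nat -> V, forall x, exists n, e n = x.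
Proof.
  pose (L := fun k : nat =>
    proj1_sig (constructive_indefinite_description _ (finite_before (INR k)))).
  assert (HL : forall k x, t x < INR k -> In x (L k)).
  { intros k x H. unfold L. destruct (constructive_indefinite_description _ _) as [l Hl].
    exact (Hl x H). }
  exists (fun n => let '(k, i) := Cantor.of_nat n in nth i (L k) v0).
  intro x. destruct (INR_archimed 1 (t x)) as [k Hk]; [lra|].
  destruct (In_nth _ _ v0 (HL k x ltac:(lra))) as [i [_ Hi]].
  exists (Cantor.to_nat (k, i)). rewrite Cantor.cancel_of_to. exact Hi.
Qed.

Lemma good_weak_descendants v :
  finite_pred (fun w => descendant E v w) -> good E (weak_descendant E v).
Proof.
  intros Dfin.
  assert (Sub : forall y w, weak_descendant E v y -> descendant E y w -> descendant E v w).
  { intros y w Hy D. eapply weak_descendant_descendant; eauto. }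
  split; [|split; [|split]].
  - intros y Hy [Hd _]. apply Hd. eapply finite_pred_sub; [exact Dfin|].
    intros w [_ D]. exact (Sub y w Hy D).
  - intros x [a [Wa D]] _. eapply weak_descendant_trans; eauto.
  - exists v. split; [left; reflexivity|]. intros w [->|H] Hne; [congruence | exact H].
  - intros y Hy Dy. exfalso. apply Dy. eapply finite_pred_sub; [exact Dfin|].
    intros w D. exact (Sub y w Hy D).
Qed.

Lemma exists_good v : exists S, S v /\ good E S.
Proof.
  destruct (classic (finite_pred (fun w => descendant E v w))) as [Dfin|Dinf].
  { exists (weak_descendant E v). split; [left; reflexivity | apply good_weak_descendants, Dfin]. }
  destruct (ray_from_infinite v Dinf) as [p0 Hp0].
  destruct (vertices_enumeration v) as [e He].
  destruct (greedy_sequence (ray_from E v)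
              (fun p q => forall y, ray_hull v q y -> ray_hull v p y)
              (fun q u => ~ ray_hull v q u) e p0) as [P [_ HP]].
  { intros p y H. exact H. }
  { exact Hp0. }
  destruct (ray_hull_limit v P) as [q [Hq Hqsub]]; [intro n; apply HP .. |].
  exists (ray_hull v q). split; [apply ray_hull_origin, Hq|].
  apply (ray_hull_good v q Hq). intros y Hy. apply NNPP. intro Ninf.
  destruct (classic (y = v)) as [->|Nyv].
  { apply Ninf. eapply finite_pred_sub; [apply (finite_pred_eq v)|].
    intros w [[[->|D] _] N]; [reflexivity | contradiction]. }
  destruct (ray_hull_avoid v q y Hq Nyv Hy Ninf) as [q' [Hq' [Hsub Hy']]].
  destruct (He y) as [n <-].
  apply (proj2 (proj2 (HP n))); [|exact (Hqsub (S n) _ Hy)].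
  exists q'. split; [exact Hq'|]. split; [|exact Hy'].
  intros x Hx. apply (Hqsub n), Hsub, Hx.
Qed.

Lemma good_stable_root v :
  exists S r, S v /\ good E S /\ is_root E S r /\
    forall T, good E T -> T v -> T r -> is_root E T r.
Proof.
  set (Root := fun u => exists S, S v /\ good E S /\ is_root E S u).
  assert (Root_weak : forall u, Root u -> weak_descendant E u v).
  { intros u [S [Sv [_ [_ Hu]]]]. destruct (classic (v = u)) as [<-|N];
      [left; reflexivity | right; apply Hu; auto]. }
  destruct (finite_pred_argmin t Root) as [r [[S [Sv [Sg Sr]]] Hmin]].
  - eapply finite_pred_sub; [apply (finite_before (t v + 1))|].
    intros u Hu. destruct (Root_weak u Hu) as [->|D]; [lra|].
    apply (descendant_time E t time_increasing) in D. lra.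
  - destruct (exists_good v) as [S [Sv Sg]].
    destruct (proj1 (proj2 (proj2 Sg))) as [u Hu]. exists u, S. auto.
  - exists S, r. split; [exact Sv|]. split; [exact Sg|]. split; [exact Sr|].
    intros T Tg Tv Tr. destruct (proj1 (proj2 (proj2 Tg))) as [r' Hr'].
    assert (r = r') as <-; [|exact Hr'].
    apply NNPP. intro N. pose proof (proj2 Hr' r Tr N) as D.
    apply (descendant_time E t time_increasing) in D.
    specialize (Hmin r' (ex_intro _ T (conj Tv (conj Tg Hr')))). lra.
Qed.

End Biosphere.

Theorem mainTheorem9 (V : Type) (E : V -> V -> Prop) (t : V -> R)
  (HG : infinite_biosphere E t) (v : V) :
  exists S : V -> Prop,
    S v /\ good E S /\
    forall T : V -> Prop,
      (forall x, S x -> T x) -> (exists y, T y /\ ~ S y) -> ~ good E T.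
Proof.
  destruct HG as [Ht [Hbefore [Hch _]]].
  destruct (good_stable_root E t Ht Hch Hbefore v) as [S0 [r [S0v [S0g [S0r Hroot]]]]].
  destruct (vertices_enumeration t Hbefore v) as [e He].
  destruct (greedy_sequence (fun C => good E C /\ forall x, S0 x -> C x)
              (fun C T => forall x, C x -> T x) (fun T u => T u) e S0)
    as [C [C0 HC]]; [auto | split; [exact S0g | auto] |].
  exists (fun x => exists n, C n x). split; [exists O; rewrite C0; exact S0v|]. split.
  - apply (chain_union_good E Hch C r); intro n; [apply HC | apply HC |].
    apply Hroot; apply HC; [exact S0v | apply S0r].
  - intros T Hsub [y [Ty Ny]] Tg. destruct (He y) as [n <-].
    apply Ny. exists (S n). apply (HC n). exists T.
    split; [split; [exact Tg|] | split; [|exact Ty]].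
    + intros x Hx. apply Hsub. exists O. rewrite C0. exact Hx.
    + intros x Hx. apply Hsub. exists n. exact Hx.
Qed.
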